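(* For any $\epsilon>0$ and any positive integer $r$, there exist a graph $G$ with $\Delta(G)=r$ and a tree $T$, each with $n$ vertices (for some $n$), such that $3\Delta(G)+\ell(T)-2<(1+\epsilon)n$, but $G$ and $T$ do not pack.
   Context: All graphs are finite and simple; $\Delta(G)$ is the maximum degree of $G$ and $\ell(T)$ is the number of leaves (vertices of degree $1$) of $T$. For graphs $G$ and $H$ with $|V(G)|\ge |V(H)|$, we say $G$ and $H$ pack if there is an injective function $f:V(H)\to V(G)$ such that for every edge $xy\in E(H)$, $f(x)f(y)\notin E(G)$. *)

From mathcomp Require Import all_boot all_order all_algebra.
From mathcomp Require Import reals.
Set Implicit Arguments. Unset Strict Implicit. Unset Printing Implicit Defensive.

Section Graphs.
Variable V : finType.

Definition simple_graph (e : rel V) : Prop := symmetric e /\ irreflexive e.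

Definition deg (e : rel V) (x : V) : nat := #|[set y | e x y]|.

Definition maxdeg (e : rel V) : nat := \max_(x : V) deg e x.

Definition leaves (e : rel V) : nat := #|[set x | deg e x == 1%N]|.

Definition connected (e : rel V) : Prop := forall x y : V, connect e x y.

Definition acyclic (e : rel V) : Prop :=
  forall c : seq V, uniq c -> (2 < size c)%N -> ~~ cycle e c.

Definition is_tree (e : rel V) : Prop :=
  simple_graph e /\ connected e /\ acyclic e.
End Graphs.

Definition pack (V W : finType) (G : rel V) (H : rel W) : Prop :=
  exists f : W -> V, injective f /\ forall x y : W, H x y -> ~~ G (f x) (f y).

(* A star cannot pack with a graph without isolated vertices: its centre,
   adjacent to every other vertex, would have to land on a vertex adjacent
   to nothing.  A disjoint union of (r+1)-cliques on n vertices has maximum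
   degree r and no isolated vertex, and a star has n - 1 leaves, so
   3r + (n - 1) - 2 < (1 + eps) n as soon as n > 3r / eps. *)
From mathcomp Require Import all_boot all_order all_algebra.
From mathcomp Require Import reals.
From mathcomp Require Import zify lra.
Import Order.TTheory GRing.Theory Num.Theory.

Set Implicit Arguments.
Unset Strict Implicit.
Unset Printing Implicit Defensive.

Section Star.
Variables (W : finType) (c : W).

Definition star : rel W := fun x y => (x != y) && ((x == c) || (y == c)).

Lemma star_simple : simple_graph star.
Proof.
split; last by move=> x; rewrite /star eqxx.
by move=> x y; rewrite /star eq_sym orbC.
Qed.

Lemma star_connected : connected star.
Proof.
have to_c x : connect star x c.
  case: (eqVneq x c) => [->|xc]; first exact: connect0.
  by apply: connect1; rewrite /star xc eqxx orbT.
move=> x y; apply: connect_trans (to_c x) _.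
case: (eqVneq c y) => [->|cy]; first exact: connect0.
by apply: connect1; rewrite /star cy eqxx.
Qed.

Lemma star_leaf_edge x y : x != c -> y != c -> ~~ star x y.
Proof. by move=> /negbTE xc /negbTE yc; rewrite /star xc yc andbF. Qed.

Lemma star_acyclic : acyclic star.
Proof.
move=> s s_uniq s_size; case: (boolP (c \in s)) => [cs | cNs].
- (* Rotated to start at the centre, the cycle continues with two adjacent leaves. *)
  move: s_uniq s_size; rewrite -(rot_uniq (index c s)).
  rewrite -(size_rot (index c s)) -(rot_cycle (index c s)) rot_index //.
  case: (drop _ _ ++ _) => [|y [|z t]] //=.
  rewrite !inE !negb_or => /and4P[/and3P[cy cz _] _ _ _] _.
  by rewrite (negbTE (@star_leaf_edge y z _ _)) ?andbF // eq_sym.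
- case: s s_uniq s_size cNs => [|x [|y t]] //= _ _.
  rewrite !inE !negb_or => /and3P[cx cy _].
  by rewrite (negbTE (@star_leaf_edge x y _ _)) // eq_sym.
Qed.

Lemma star_tree : is_tree star.
Proof. by split; [exact: star_simple | split; [exact: star_connected | exact: star_acyclic]]. Qed.

Lemma pack_star_isolated (V : finType) (G : rel V) :
  irreflexive G -> (#|V| <= #|W|)%N -> pack G star -> exists x : V, deg G x = 0%N.
Proof.
move=> G_irr le_VW [f [f_inj f_edge]]; exists (f c).
apply/eqP; rewrite cards_eq0; apply/eqP/setP => y; rewrite !inE.
have /codomP[w ->] := inj_card_onto f_inj le_VW y.
case: (eqVneq w c) => [->|wc]; first exact: G_irr.
by apply/negbTE/f_edge; rewrite /star eq_sym wc eqxx.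
Qed.
End Star.

Lemma maxdeg_regular (V : finType) (e : rel V) (d : nat) (x0 : V) :
  (forall x, deg e x = d) -> maxdeg e = d.
Proof.
move=> deg_d; apply/eqP; rewrite eqn_leq; apply/andP; split.
- by apply/bigmax_leqP => x _; rewrite deg_d.
- by rewrite -(deg_d x0) (leq_bigmax x0).
Qed.

Section FiberGraph.
Variables (V : finType) (I : eqType) (f : V -> I).

Definition fiber_graph : rel V := fun x y => (x != y) && (f x == f y).

Lemma fiber_graph_simple : simple_graph fiber_graph.
Proof.
split; last by move=> x; rewrite /fiber_graph eqxx.
by move=> x y; rewrite /fiber_graph eq_sym (eq_sym (f x)).
Qed.

Lemma deg_fiber_graph x : deg fiber_graph x = #|[set y | f y == f x]|.-1.
Proof.
rewrite /deg; have -> : [set y | fiber_graph x y] = [set y | f y == f x] :\ x.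
  by apply/setP => y; rewrite !inE /fiber_graph eq_sym (eq_sym (f x)).
by rewrite (cardsD1 x [set y | f y == f x]) inE eqxx.
Qed.
End FiberGraph.

Lemma card_divn_fiber (k m : nat) (x : 'I_(k * m)) :
  #|[set y : 'I_(k * m) | y %/ k == x %/ k]| = k.
Proof.
have k_gt0 : (0 < k)%N by have := ltn_ord x; nia.
pose q := x %/ k.
have q_lt_m : (q < m)%N by rewrite ltn_divLR //; have := ltn_ord x; lia.
have blockP (j : 'I_k) : (q * k + j < k * m)%N.
  by rewrite mulnC; have := ltn_ord j; have := q_lt_m; nia.
pose block (j : 'I_k) : 'I_(k * m) := Ordinal (blockP j).
have block_inj : injective block by move=> i j /(congr1 val) /addnI /val_inj.
suff -> : [set y : 'I_(k * m) | y %/ k == q] = block @: setT.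
  by rewrite card_imset // cardsT card_ord.
apply/setP => y; rewrite !inE; apply/eqP/imsetP.
- move=> yq; exists (Ordinal (ltn_pmod y k_gt0)) => //.
  by apply/val_inj; rewrite /= -yq -divn_eq.
- by case=> j _ ->; rewrite /= divnMDl // divn_small // addn0.
Qed.

Local Open Scope ring_scope.

Theorem proposition10 (R : realType) (eps : R) (r : nat) :
  0 < eps -> (0 < r)%N ->
  exists (n : nat) (G T : rel 'I_n),
    [/\ simple_graph G, maxdeg G = r, is_tree T,
        ((3 * maxdeg G + leaves T)%:R - 2 < (1 + eps) * n%:R) &
        ~ pack G T].
Proof.
move=> eps_gt0 r_gt0.
pose N := Num.Def.archi_bound ((3 * r)%:R / eps).
pose n := (r.+1 * N.+1)%N.
have n_gt0 : (0 < n)%N by rewrite muln_gt0.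
pose G := fiber_graph (fun x : 'I_n => (x %/ r.+1)%N).
pose T := star (Ordinal n_gt0).
have deg_G x : deg G x = r by rewrite deg_fiber_graph card_divn_fiber.
have maxdeg_G : maxdeg G = r := maxdeg_regular (Ordinal n_gt0) deg_G.
have n_large : (3 * r)%:R < eps * n%:R.
  rewrite -ltr_pdivrMl // mulrC; apply: (lt_le_trans (archi_boundP _)).
    by rewrite divr_ge0 // ltW.
  by rewrite ler_nat /n (leq_trans (leqnSn N)) // leq_pmull.
have leaves_T : (leaves T <= n)%N by rewrite /leaves (leq_trans (max_card _)) ?card_ord.
exists n, G, T; split => //.
- exact: fiber_graph_simple.
- exact: star_tree.
- rewrite maxdeg_G natrD mulrDl mul1r.
  have : (leaves T)%:R <= n%:R :> R by rewrite ler_nat.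
  lra.
- case/(pack_star_isolated (fiber_graph_simple _).2 (leqnn _)) => x.
  by rewrite deg_G; lia.
Qed.
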